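(* Let $X\in\mathbb{R}^{n\times p}$ with columns $\mathbf x_1,\dots,\mathbf x_p$, let $\mathbf y\in\mathbb{R}^n$, $\mathbf y\neq\mathbf 0$, let $\|X^T\mathbf y\|_\infty\ge\lambda_1>\lambda_2>0$, and fix $j$ with $\mathbf x_j\ne\mathbf 0$. Define $$\Omega=\Big\{\boldsymbol\theta\in\mathbb{R}^n:\ \big\langle\boldsymbol\theta_1^*-\tfrac{\mathbf y}{\lambda_1},\boldsymbol\theta-\boldsymbol\theta_1^*\big\rangle\ge0,\ \big\langle\boldsymbol\theta-\tfrac{\mathbf y}{\lambda_2},\boldsymbol\theta_1^*-\boldsymbol\theta\big\rangle\ge0\Big\},$$ $u_j^+(\lambda_2)=\max_{\boldsymbol\theta\in\Omega}\langle\mathbf x_j,\boldsymbol\theta\rangle$ and $u_j^-(\lambda_2)=\max_{\boldsymbol\theta\in\Omega}\langle-\mathbf x_j,\boldsymbol\theta\rangle$. Let $\mathbf a=\frac{\mathbf y}{\lambda_1}-\boldsymbol\theta_1^*$, $\mathbf b=\frac{\mathbf y}{\lambda_2}-\boldsymbol\theta_1^*$, and when $\mathbf a\ne\mathbf 0$ let $\mathbf x_j^\perp=\mathbf x_j-\mathbf a\frac{\langle\mathbf x_j,\mathbf a\rangle}{\|\mathbf a\|_2^2}$ and $\mathbf y^\perp=\mathbf y-\mathbf a\frac{\langle\mathbf y,\mathbf a\rangle}{\|\mathbf a\|_2^2}$. Consider the formulas (P1) $u_j^+(\lambda_2)=\langle\mathbf x_j,\boldsymbol\theta_1^*\rangle+\frac{\frac1{\lambda_2}-\frac1{\lambda_1}}{2}\big[\|\mathbf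 x_j^\perp\|_2\|\mathbf y^\perp\|_2+\langle\mathbf x_j^\perp,\mathbf y^\perp\rangle\big]$; (N1) $u_j^-(\lambda_2)=-\langle\mathbf x_j,\boldsymbol\theta_1^*\rangle+\frac{\frac1{\lambda_2}-\frac1{\lambda_1}}{2}\big[\|\mathbf x_j^\perp\|_2\|\mathbf y^\perp\|_2-\langle\mathbf x_j^\perp,\mathbf y^\perp\rangle\big]$; (N2) $u_j^-(\lambda_2)=-\langle\mathbf x_j,\boldsymbol\theta_1^*\rangle+\frac12\big[\|\mathbf x_j\|_2\|\mathbf b\|_2-\langle\mathbf x_j,\mathbf b\rangle\big]$; (P2) $u_j^+(\lambda_2)=\langle\mathbf x_j,\boldsymbol\theta_1^*\rangle+\frac12\big[\|\mathbf x_j\|_2\|\mathbf b\|_2+\langle\mathbf x_j,\mathbf b\rangle\big]$. Then: 1) If $\mathbf a\ne\mathbf 0$ and $\frac{\langle\mathbf b,\mathbf a\rangle}{\|\mathbf b\|_2\|\mathbf a\|_2}>\frac{|\langle\mathbf x_j,\mathbf a\rangle|}{\|\mathbf x_j\|_2\|\mathbf a\|_2}$, then (P1) and (N1) hold. 2) If $\langle\mathbf x_j,\mathbf a\rangle>0$ and $\frac{\langle\mathbf b,\mathbf a\rangle}{\|\mathbf b\|_2\|\mathbf a\|_2}\le\frac{\langle\mathbf x_j,\mathbf a\rangle}{\|\mathbf x_j\|_2\|\mathbf a\|_2}$, then (P1) and (N2) hold. 3) If $\langle\mathbf x_j,\mathbf a\rangle<0$ and $\frac{\langle\mathbf b,\mathbf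 a\rangle}{\|\mathbf b\|_2\|\mathbf a\|_2}\le\frac{-\langle\mathbf x_j,\mathbf a\rangle}{\|\mathbf x_j\|_2\|\mathbf a\|_2}$, then (P2) and (N1) hold. 4) If $\mathbf a=\mathbf 0$, then (N2) and (P2) hold.
   Context: $X\in\mathbb{R}^{n\times p}$ is a matrix with columns $\mathbf x_j$ and $\mathbf y\in\mathbb{R}^n$ a vector. Let $F=\{\boldsymbol\theta\in\mathbb{R}^n:\|X^T\boldsymbol\theta\|_\infty\le 1\}$. For $\lambda>0$, the Lasso dual optimum $\boldsymbol\theta^*(\lambda)$ is the unique minimizer of $\frac12\|\boldsymbol\theta-\mathbf y/\lambda\|_2^2$ over $\boldsymbol\theta\in F$, i.e. the Euclidean projection of $\mathbf y/\lambda$ onto $F$. Write $\boldsymbol\theta_1^*=\boldsymbol\theta^*(\lambda_1)$. *)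

From HB Require Import structures.
From mathcomp Require Import all_boot all_order all_algebra.
Set Implicit Arguments. Unset Strict Implicit. Unset Printing Implicit Defensive.
Import Order.TTheory GRing.Theory Num.Theory.
Local Open Scope ring_scope.

Definition dot (R : rcfType) (n : nat) (u v : 'cV[R]_n) : R :=
  \sum_(i < n) u i 0 * v i 0.

Definition norm2 (R : rcfType) (n : nat) (u : 'cV[R]_n) : R :=
  Num.sqrt (dot u u).

Definition linf (R : rcfType) (p : nat) (v : 'cV[R]_p) : R :=
  \big[Num.max/0]_(i < p) `|v i 0|.

Definition dual_feasible (R : rcfType) (n p : nat) (X : 'M[R]_(n, p))
  (theta : 'cV[R]_n) : Prop :=
  linf (X^T *m theta) <= 1.

(* theta is the minimizer of 1/2 ||theta - y/lam||^2 over F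
   (i.e. theta = theta^*(lam), the projection of y/lam onto F) *)
Definition lasso_dual_opt (R : rcfType) (n p : nat) (X : 'M[R]_(n, p))
  (y : 'cV[R]_n) (lam : R) (theta : 'cV[R]_n) : Prop :=
  dual_feasible X theta /\
  forall theta', dual_feasible X theta' ->
    (norm2 (theta - lam^-1 *: y)) ^+ 2 / 2 <= (norm2 (theta' - lam^-1 *: y)) ^+ 2 / 2.

Definition Omega (R : rcfType) (n : nat) (y theta1 : 'cV[R]_n) (lam1 lam2 : R)
  (theta : 'cV[R]_n) : Prop :=
  0 <= dot (theta1 - lam1^-1 *: y) (theta - theta1) /\
  0 <= dot (theta - lam2^-1 *: y) (theta1 - theta).

Definition is_max_on (R : rcfType) (T : Type) (S : T -> Prop) (f : T -> R) (u : R) : Prop :=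
  (exists t, S t /\ f t = u) /\ (forall t, S t -> f t <= u).

From HB Require Import structures.
From mathcomp Require Import all_boot all_order all_algebra.
From mathcomp Require Import ring lra.
Import Order.TTheory GRing.Theory Num.Theory.
Local Open Scope ring_scope.
Set Implicit Arguments. Unset Strict Implicit. Unset Printing Implicit Defensive.

(* Write theta = theta1 + d.  With a = y/lam1 - theta1 and
   b = y/lam2 - theta1 the two constraints defining Omega read <a, d> <= 0 and
   <d, d> <= <b, d>: Omega is theta1 plus the "half ball" cut out of the ball
   with diameter [0, b] by the half-space <a, d> <= 0.
   - On the whole ball, <x, d> is maximal at m = b/2 + (|b|/2|x|) x, with
     value (|x||b| + <x, b>)/2 (Cauchy-Schwarz).
   - If <a, m> <= 0 the ball maximiser lies in the half ball, which gives the
     formulas (P2)/(N2).  If <a, m> > 0, any feasible d can be pushed along the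
     segment towards m onto the hyperplane <a, d> = 0 without decreasing
     <x, d>; on that hyperplane x and b may be replaced by their components
     orthogonal to a, which gives (P1)/(N1) since b^perp = (1/lam2 - 1/lam1) y^perp.
   - The sign of <a, m> is that of cos(b, a) + cos(x, a); the optimality of
     theta1 gives <a, theta1> >= 0, hence <a, b> > 0 when a <> 0, which makes
     each case hypothesis of the theorem decide the sign for x = +-x_j. *)

Section InnerProduct.
Variables (R : rcfType) (n : nat).
Implicit Types (u v w : 'cV[R]_n).

Lemma dotC u v : dot u v = dot v u.
Proof. by apply: eq_bigr => i _; rewrite mulrC. Qed.

Lemma dotDl u v w : dot (u + v) w = dot u w + dot v w.
Proof. by rewrite /dot -big_split; apply: eq_bigr => i _; rewrite mxE mulrDl. Qed.

Lemma dotZl (k : R) u w : dot (k *: u) w = k * dot u w.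
Proof. by rewrite /dot mulr_sumr; apply: eq_bigr => i _; rewrite mxE mulrA. Qed.

Lemma dotNl u w : dot (- u) w = - dot u w.
Proof. by rewrite -scaleN1r dotZl mulN1r. Qed.

Lemma dotBl u v w : dot (u - v) w = dot u w - dot v w.
Proof. by rewrite dotDl dotNl. Qed.

Lemma dotDr u v w : dot w (u + v) = dot w u + dot w v.
Proof. by rewrite dotC dotDl !(dotC w). Qed.

Lemma dotZr (k : R) u w : dot w (k *: u) = k * dot w u.
Proof. by rewrite dotC dotZl dotC. Qed.

Lemma dotNr u w : dot w (- u) = - dot w u.
Proof. by rewrite dotC dotNl dotC. Qed.

Lemma dotBr u v w : dot w (u - v) = dot w u - dot w v.
Proof. by rewrite dotDr dotNr. Qed.

Lemma dot0l w : dot 0 w = 0.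
Proof. by rewrite /dot big1 // => i _; rewrite mxE mul0r. Qed.

Lemma dot_ge0 u : 0 <= dot u u.
Proof. by apply: sumr_ge0 => i _; rewrite -expr2 sqr_ge0. Qed.

Lemma dot_eq0 u : (dot u u == 0) = (u == 0).
Proof.
apply/idP/eqP => [|->]; last by rewrite dot0l.
rewrite psumr_eq0 => [/allP u0|i _]; last by rewrite -expr2 sqr_ge0.
apply/matrixP => i k; rewrite (ord1 k) mxE.
by have /= := u0 i (mem_index_enum i); rewrite mulf_eq0 orbb => /eqP.
Qed.

Lemma sq_norm u : norm2 u ^+ 2 = dot u u.
Proof. exact: sqr_sqrtr (dot_ge0 u). Qed.

Lemma norm_ge0 u : 0 <= norm2 u.
Proof. exact: sqrtr_ge0. Qed.

Lemma norm_gt0 u : (0 < norm2 u) = (u != 0).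
Proof. by rewrite /norm2 sqrtr_gt0 lt0r dot_ge0 dot_eq0 andbT. Qed.

Lemma normN u : norm2 (- u) = norm2 u.
Proof. by rewrite /norm2 dotNl dotNr opprK. Qed.

Lemma normZ (k : R) u : norm2 (k *: u) = `|k| * norm2 u.
Proof. by rewrite /norm2 dotZl dotZr mulrA -expr2 sqrtrM ?sqr_ge0 // sqrtr_sqr. Qed.

Lemma cauchy_schwarz u v : dot u v <= norm2 u * norm2 v.
Proof.
have [-> | u0] := eqVneq u 0; first by rewrite dot0l mulr_ge0 ?norm_ge0.
have [-> | v0] := eqVneq v 0; first by rewrite dotC dot0l mulr_ge0 ?norm_ge0.
have nu := norm_gt0 u; have nv := norm_gt0 v; rewrite u0 v0 in nu nv.
have := dot_ge0 (norm2 v *: u - norm2 u *: v).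
rewrite dotBl !dotBr !dotZl !dotZr -!sq_norm (dotC v u).
have := mulr_gt0 nu nv; nra.
Qed.

(* The cosine of the angle between u and v (0 if one of them vanishes). *)
Definition cosang u v : R := dot u v / (norm2 u * norm2 v).

Lemma cosangNl u v : cosang (- u) v = - cosang u v.
Proof. by rewrite /cosang dotNl normN mulNr. Qed.

Lemma normr_cosang u v : `|cosang u v| = `|dot u v| / (norm2 u * norm2 v).
Proof.
by rewrite /cosang normrM normfV [`|_ * _|]ger0_norm // mulr_ge0 ?norm_ge0.
Qed.

End InnerProduct.

Section HalfBall.
Variables (R : rcfType) (n : nat).
Implicit Types (a b d w x v : 'cV[R]_n).

(* The closed ball with diameter [0, b]: |d - b/2| <= |b|/2. *)
Definition dball b d : Prop := dot d d <= dot b d.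

Definition halfball a b d : Prop := dot a d <= 0 /\ dball b d.

Definition ball_argmax x b : 'cV[R]_n := 2^-1 *: b + (norm2 b / (2 * norm2 x)) *: x.

Definition perp a v : 'cV[R]_n := v - (dot v a / norm2 a ^+ 2) *: a.

(* Upper bound of <x, .> on the ball, from Cauchy-Schwarz applied to d - b/2. *)
Lemma dball_ub x b d : dball b d -> dot x d <= 1 / 2 * (norm2 x * norm2 b + dot x b).
Proof.
move=> hd; set e := d - 2^-1 *: b.
have he : dot e e <= (norm2 b / 2) ^+ 2.
  rewrite /e dotBl !dotBr !dotZl !dotZr (dotC d b) expr_div_n sq_norm.
  by move: hd; rewrite /dball; lra.
have hne : norm2 e <= norm2 b / 2.
  rewrite /norm2 -[X in _ <= X]ger0_norm ?divr_ge0 ?norm_ge0 //.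
  by rewrite -sqrtr_sqr ler_wsqrtr.
have -> : d = e + 2^-1 *: b by rewrite /e subrK.
rewrite dotDr dotZr.
have := cauchy_schwarz x e; have := ler_wpM2l (norm_ge0 x) hne; lra.
Qed.

Lemma ball_argmax_max x b :
  dball b (ball_argmax x b) /\
  dot x (ball_argmax x b) = 1 / 2 * (norm2 x * norm2 b + dot x b).
Proof.
rewrite /dball /ball_argmax !dotDl !dotDr !dotZl !dotZr (dotC x b).
rewrite -(sq_norm x) -(sq_norm b).
have [nx0|nx0] := eqVneq (norm2 x) 0.
  have := sqr_ge0 (norm2 b); rewrite nx0 mulr0 invr0 mulr0 !mul0r; split; lra.
split; last by field.
have -> : norm2 b / (2 * norm2 x) * (norm2 b / (2 * norm2 x) * norm2 x ^+ 2)
  = norm2 b ^+ 2 / 4 by field.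
lra.
Qed.

Lemma dball_convex b d m (t : R) : 0 <= t <= 1 ->
  dball b d -> dball b m -> dball b ((1 - t) *: d + t *: m).
Proof.
move=> /andP[t0 t1]; rewrite /dball => hd hm.
have hdm := dot_ge0 (d - m); rewrite dotBl !dotBr (dotC m d) in hdm.
rewrite !dotDl !dotDr !dotZl !dotZr (dotC m d).
have u0 : 0 <= 1 - t by rewrite subr_ge0.
have hm' : 0 <= dot b m - dot m m by rewrite subr_ge0.
have hd' : 0 <= dot b d - dot d d by rewrite subr_ge0.
have := mulr_ge0 (mulr_ge0 t0 u0) hdm.
have := mulr_ge0 t0 hm'; have := mulr_ge0 u0 hd'.
nra.
Qed.

Lemma perp_orth a v : a != 0 -> dot a (perp a v) = 0.
Proof.
rewrite -dot_eq0 => ha.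
by rewrite /perp dotBr dotZr sq_norm (dotC a v) mulfVK // subrr.
Qed.

Lemma perp_dot a v w : dot a w = 0 -> dot (perp a v) w = dot v w.
Proof. by move=> h; rewrite /perp dotBl dotZl h mulr0 subr0. Qed.

Lemma perpN a x : perp a (- x) = - perp a x.
Proof. by rewrite /perp dotNl; apply/matrixP => i k; rewrite !mxE; ring. Qed.

Lemma perp_addZ a v (c : R) : a != 0 -> perp a (a + c *: v) = c *: perp a v.
Proof.
rewrite -dot_eq0 => ha; rewrite /perp sq_norm dotDl dotZl.
by apply/matrixP => i k; rewrite !mxE; field.
Qed.

Lemma halfball_max_nocut a b x : dot a (ball_argmax x b) <= 0 ->
  is_max_on (halfball a b) (dot x) (1 / 2 * (norm2 x * norm2 b + dot x b)).
Proof.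
move=> hm; have [mball mval] := ball_argmax_max x b.
split; first by exists (ball_argmax x b).
by move=> d [_ hd]; apply: dball_ub.
Qed.

(* If the ball maximiser violates the cut, every point of the half ball can be
   moved towards it, onto the hyperplane <a, .> = 0, increasing <x, .>. *)
Lemma push_to_hyperplane a b x d : 0 < dot a (ball_argmax x b) ->
  halfball a b d -> exists2 w, dot a w = 0 /\ dball b w & dot x d <= dot x w.
Proof.
move=> hm [had hd]; have [mball mval] := ball_argmax_max x b.
set m := ball_argmax x b in hm mball mval.
have hxd : dot x d <= dot x m by rewrite mval; apply: dball_ub.
set t := - dot a d / (dot a m - dot a d).
have hma : 0 < dot a m - dot a d by lra.
have t0 : 0 <= t by rewrite divr_ge0 //; lra.
have t1 : t <= 1 by rewrite ler_pdivrMr //; lra.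
exists ((1 - t) *: d + t *: m); last first.
  have hxd' : 0 <= dot x m - dot x d by rewrite subr_ge0.
  rewrite dotDr !dotZr; have := mulr_ge0 t0 hxd'; nra.
split; last by apply: dball_convex; rewrite ?t0.
by rewrite dotDr !dotZr /t; field; lra.
Qed.

Lemma hyperplane_ub a b x w : dot a w = 0 -> dball b w ->
  dot x w <= 1 / 2 * (norm2 (perp a x) * norm2 (perp a b) + dot (perp a x) (perp a b)).
Proof.
move=> haw hw; rewrite -(perp_dot x haw); apply: dball_ub.
by rewrite /dball (perp_dot b haw).
Qed.

Lemma halfball_max_cut a b x : a != 0 -> 0 < dot a (ball_argmax x b) ->
  is_max_on (halfball a b) (dot x)
    (1 / 2 * (norm2 (perp a x) * norm2 (perp a b) + dot (perp a x) (perp a b))).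
Proof.
move=> ha hm; split => [|d hd]; last first.
  have [w [haw hw] hxw] := push_to_hyperplane hm hd.
  exact: le_trans hxw (hyperplane_ub x haw hw).
have [mball mval] := ball_argmax_max (perp a x) (perp a b).
set m := ball_argmax _ _ in mball mval.
have ham : dot a m = 0 by rewrite dotDr !dotZr !perp_orth // !mulr0 addr0.
exists m; split; last by rewrite -mval perp_dot.
by split; [rewrite ham | rewrite /dball -(perp_dot b ham)].
Qed.

Lemma ball_argmax_cut_sign a b x : a != 0 -> b != 0 -> x != 0 ->
  (0 < dot a (ball_argmax x b)) = (- cosang x a < cosang b a).
Proof.
rewrite -!norm_gt0 => na nb nx.
have -> : dot a (ball_argmax x b)
        = norm2 b * norm2 a / 2 * (cosang b a + cosang x a).
  rewrite /ball_argmax /cosang dotDr !dotZr (dotC a b) (dotC a x).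
  by field; rewrite !gt_eqF.
by rewrite pmulr_rgt0 ?divr_gt0 ?mulr_gt0 //; apply/idP/idP; lra.
Qed.

End HalfBall.

Lemma linf_scale (R : rcfType) (p : nat) (v : 'cV[R]_p) (s : R) :
  0 <= s -> s <= 1 -> linf (s *: v) <= linf v.
Proof.
move=> s0 s1; apply: (big_ind2 (fun u w => u <= w)) => //.
  by move=> x1 x2 y1 y2 h1 h2; apply: le_max2.
by move=> i _; rewrite mxE normrM ger0_norm // ler_piMl.
Qed.

(* Variational inequality of the projection onto the feasible set, tested
   against the feasible points (1 - r) theta: <y/lam - theta, theta> >= 0. *)
Lemma dual_opt_residual_ge0 (R : rcfType) (n p : nat) (X : 'M[R]_(n, p))
  (y th : 'cV[R]_n) (lam : R) :
  lasso_dual_opt X y lam th -> 0 <= dot (lam^-1 *: y - th) th.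
Proof.
move=> [hf hopt]; move Ea : (lam^-1 *: y - th) => a.
set g := dot a th; set T := dot th th.
rewrite leNgt; apply/negP => hg.
have T0 : 0 <= T := dot_ge0 th.
have Tg : 0 < T - g by lra.
set r := - g / (T - g).
have r0 : 0 < r by rewrite divr_gt0 //; lra.
have r1 : r <= 1 by rewrite ler_pdivrMr //; lra.
have hfe : dual_feasible X ((1 - r) *: th).
  rewrite /dual_feasible -scalemxAr; apply: le_trans hf; apply: linf_scale; lra.
have := hopt _ hfe.
have -> : th - lam^-1 *: y = - a by rewrite -Ea opprB.
have -> : (1 - r) *: th - lam^-1 *: y = - (a + r *: th).
  by rewrite -Ea; apply/matrixP => i k; rewrite !mxE; ring.
rewrite !sq_norm !dotNl !dotNr !opprK !dotDl !dotDr !dotZl !dotZr (dotC th a) -/g -/T.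
have hr : r * (T - g) = - g by rewrite divfK // gt_eqF.
have h1 : 0 < r * - g by rewrite mulr_gt0 //; lra.
have := mulr_gt0 r0 h1; nra.
Qed.

Section OmegaMaximum.
Variables (R : rcfType) (n : nat) (y theta1 : 'cV[R]_n) (lam1 lam2 : R).
Hypotheses (lam2_gt0 : 0 < lam2) (lam21 : lam2 < lam1).

Local Notation a := (lam1^-1 *: y - theta1).
Local Notation b := (lam2^-1 *: y - theta1).
Local Notation Om := (Omega y theta1 lam1 lam2).

Lemma inv_gap_gt0 : 0 < lam2^-1 - lam1^-1.
Proof.
have lam1_gt0 : 0 < lam1 by apply: lt_trans lam21.
by rewrite subr_gt0 ltf_pV2.
Qed.

Lemma Omega_shift th : Om th <-> halfball a b (th - theta1).
Proof.
rewrite /Omega /halfball /dball.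
have -> : theta1 - lam1^-1 *: y = - a by rewrite opprB.
have -> : th - lam2^-1 *: y = (th - theta1) - b by rewrite opprB addrA subrK.
have -> : theta1 - th = - (th - theta1) by rewrite opprB.
move: (th - theta1) => d.
have -> : dot (d - b) (- d) = dot b d - dot d d by rewrite dotNr dotBl opprB.
by rewrite dotNl oppr_ge0 subr_ge0.
Qed.

Lemma Omega_max_of_halfball x M : is_max_on (halfball a b) (dot x) M ->
  is_max_on Om (fun th => dot x th) (dot x theta1 + M).
Proof.
move=> [[d [hd <-]] hub]; split.
  by exists (theta1 + d); rewrite dotDr Omega_shift addrAC subrr add0r.
by move=> th /Omega_shift /hub; rewrite dotBr; lra.
Qed.

Lemma Omega_max_nocut x : dot a (ball_argmax x b) <= 0 ->
  is_max_on Om (fun th => dot x th)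
    (dot x theta1 + 1 / 2 * (norm2 x * norm2 b + dot x b)).
Proof. by move=> hm; apply/Omega_max_of_halfball/halfball_max_nocut. Qed.

(* The case where the cut is active: formulas (P1)/(N1).
   Here b^perp = (1/lam2 - 1/lam1) y^perp, since b = a + (1/lam2 - 1/lam1) y. *)
Lemma Omega_max_cut x : a != 0 -> 0 < dot a (ball_argmax x b) ->
  is_max_on Om (fun th => dot x th)
    (dot x theta1 + (lam2^-1 - lam1^-1) / 2 *
       (norm2 (perp a x) * norm2 (perp a y) + dot (perp a x) (perp a y))).
Proof.
move=> ha hm; set c := lam2^-1 - lam1^-1.
have c_gt0 : 0 < c := inv_gap_gt0.
have hb : perp a b = c *: perp a y.
  rewrite -perp_addZ //; congr perp.
  by apply/matrixP => i k; rewrite !mxE /c; ring.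
have -> : c / 2 * (norm2 (perp a x) * norm2 (perp a y) + dot (perp a x) (perp a y))
  = 1 / 2 * (norm2 (perp a x) * norm2 (perp a b) + dot (perp a x) (perp a b)).
  by rewrite hb normZ dotZr gtr0_norm //; ring.
exact/Omega_max_of_halfball/halfball_max_cut.
Qed.

(* Consequently <a, b> > 0 whenever a is nonzero: <a, y> >= lam1 <a, a>. *)
Lemma dot_a_b_gt0 (p : nat) (X : 'M[R]_(n, p)) :
  lasso_dual_opt X y lam1 theta1 -> a != 0 -> 0 < dot a b.
Proof.
move=> /dual_opt_residual_ge0 hF ha.
have l1 : 0 < lam1 by apply: lt_trans lam21.
have cl1 := mulr_gt0 inv_gap_gt0 l1.
have -> : b = a + (lam2^-1 - lam1^-1) *: y.
  by apply/matrixP => i k; rewrite !mxE; ring.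
have hay : dot a y = lam1 * (dot a a + dot a theta1).
  rewrite -dotDr -dotZr; congr dot.
  by apply/matrixP => i k; rewrite !mxE; field; rewrite gt_eqF.
have haa : 0 < dot a a by rewrite lt0r dot_eq0 ha dot_ge0.
rewrite dotDr dotZr hay.
have := mulr_gt0 cl1 haa; have := mulr_ge0 (ltW cl1) hF; nra.
Qed.

Lemma cut_tests (p : nat) (X : 'M[R]_(n, p)) x :
  lasso_dual_opt X y lam1 theta1 -> a != 0 -> x != 0 ->
  [/\ 0 < cosang b a,
      (0 < dot a (ball_argmax x b)) = (- cosang x a < cosang b a)
    & (0 < dot a (ball_argmax (- x) b)) = (cosang x a < cosang b a)].
Proof.
move=> hopt ha x0; have hab := dot_a_b_gt0 hopt ha.
have hb : b != 0 by apply/eqP => hb0; move: hab; rewrite hb0 dotC dot0l ltxx.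
split; last by rewrite ball_argmax_cut_sign ?oppr_eq0 // cosangNl opprK.
  by rewrite /cosang dotC divr_gt0 ?mulr_gt0 ?norm_gt0.
exact: ball_argmax_cut_sign.
Qed.

End OmegaMaximum.

Theorem theorem3 (R : rcfType) (n p : nat) (X : 'M[R]_(n, p)) (y : 'cV[R]_n)
  (lam1 lam2 : R) (theta1 : 'cV[R]_n) (j : 'I_p) :
  y != 0 ->
  lam1 <= linf (X^T *m y) -> lam2 < lam1 -> 0 < lam2 ->
  col j X != 0 ->
  lasso_dual_opt X y lam1 theta1 ->
  let xj := col j X in
  let a := lam1^-1 *: y - theta1 in
  let b := lam2^-1 *: y - theta1 in
  let xjp := xj - (dot xj a / (norm2 a) ^+ 2) *: a in
  let yp := y - (dot y a / (norm2 a) ^+ 2) *: a in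
  let Om := Omega y theta1 lam1 lam2 in
  let uplus := fun u => is_max_on Om (fun th => dot xj th) u in
  let uminus := fun u => is_max_on Om (fun th => dot (- xj) th) u in
  let P1 := uplus (dot xj theta1 + (lam2^-1 - lam1^-1) / 2 *
                     (norm2 xjp * norm2 yp + dot xjp yp)) in
  let N1 := uminus (- dot xj theta1 + (lam2^-1 - lam1^-1) / 2 *
                     (norm2 xjp * norm2 yp - dot xjp yp)) in
  let N2 := uminus (- dot xj theta1 + 1 / 2 * (norm2 xj * norm2 b - dot xj b)) in
  let P2 := uplus (dot xj theta1 + 1 / 2 * (norm2 xj * norm2 b + dot xj b)) in
  [/\ (a != 0 ->
        dot b a / (norm2 b * norm2 a) > `|dot xj a| / (norm2 xj * norm2 a) ->
        P1 /\ N1),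
      (0 < dot xj a ->
        dot b a / (norm2 b * norm2 a) <= dot xj a / (norm2 xj * norm2 a) ->
        P1 /\ N2),
      (dot xj a < 0 ->
        dot b a / (norm2 b * norm2 a) <= - dot xj a / (norm2 xj * norm2 a) ->
        P2 /\ N1)
    & (a = 0 -> N2 /\ P2)].
Proof.
move=> _ _ l21 l2 hx hopt xj a b xjp yp Om uplus uminus P1 N1 N2 P2.
have tests (ha : a != 0) := cut_tests l2 l21 hopt ha hx.
have N1_of (ha : a != 0) (hm : 0 < dot a (ball_argmax (- xj) b)) : N1.
  by have := Omega_max_cut l2 l21 ha hm; rewrite perpN normN !dotNl.
have N2_of (hm : dot a (ball_argmax (- xj) b) <= 0) : N2.
  by have := Omega_max_nocut hm; rewrite normN !dotNl.
have ha_of : dot xj a != 0 -> a != 0 by apply: contraNneq => ->; rewrite dotC dot0l.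
split.
- move=> ha; rewrite -/(cosang b a) -normr_cosang => hcos.
  have [_ s1 s2] := tests ha.
  have := ler_norm (cosang xj a); have := ler_norm (- cosang xj a); rewrite normrN.
  by split; [apply: Omega_max_cut | apply: N1_of]; rewrite // ?s1 ?s2; lra.
- move=> /lt0r_neq0 /ha_of ha; rewrite -/(cosang b a) -/(cosang xj a) => hcos.
  have [cb s1 s2] := tests ha.
  by split; [apply: Omega_max_cut | apply: N2_of]; rewrite // ?s1 ?leNgt ?s2; lra.
- move=> /ltr0_neq0 /ha_of ha; rewrite -/(cosang b a) mulNr -/(cosang xj a) => hcos.
  have [cb s1 s2] := tests ha.
  by split; [apply: Omega_max_nocut | apply: N1_of]; rewrite // ?leNgt ?s1 ?s2; lra.
- move=> ha0; have hm (x : 'cV_n) : dot a (ball_argmax x b) <= 0.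
    by rewrite ha0 dot0l.
  by split; [apply: N2_of | apply: Omega_max_nocut].
Qed.
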